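(* Let $\theta_1<\theta_2$, $f\in C^1([\theta_1,\theta_2])$, $\gamma>1$, and let $I\subseteq[\theta_1,\theta_2]$ be a closed interval. Suppose that, for positive constants $A$ and $\alpha$ with $\alpha<2\gamma-2$, one of the following holds: $(f'(s))^2\ge A(s-\theta_1)^\alpha$ for all $s\in I$; or $(f'(s))^2\ge A(\theta_2-s)^\alpha$ for all $s\in I$. Then there is a constant $C>0$ depending only on $A,\alpha,\theta_1,\theta_2,\gamma$ such that $\int_I|f(s)|^{-1/\gamma}\,ds\le C$. *)

From HB Require Import structures.
From mathcomp Require Import all_boot all_order all_algebra.
From mathcomp Require Import all_classical all_reals all_analysis.
Set Implicit Arguments. Unset Strict Implicit. Unset Printing Implicit Defensive.

From HB Require Import structures.
From mathcomp Require Import all_boot all_order all_algebra.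
From mathcomp Require Import all_classical all_reals all_analysis.
From mathcomp Require Import ring lra measurable_realfun.
Import Order.TTheory GRing.Theory Num.Theory numFieldNormedType.Exports.
Local Open Scope classical_set_scope.
Local Open Scope ring_scope.

(* Put beta = alpha / 2, q = beta + 1 and r = 1 / gamma, so that the hypothesis
   alpha < 2 gamma - 2 reads q r < 1, and let w be the distance to theta1
   (resp. theta2).  Then |f'| >= sqrt A w^beta, so f' has constant sign inside I
   and, replacing f by -f if needed, the mean value theorem against a primitive
   of sqrt A (u - s)^beta (resp. sqrt A (t - u)^beta) gives
   f t - f s >= c (t - s)^q on I, with c = sqrt A / q.  Hence |f s| >= c |s - z|^q
   for some z in I (a zero of f, or an endpoint), and |f|^(-r) is dominated by
   the integrable singularity c^(-r) |s - z|^(-q r).  To integrate it we truncate: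
   min (|f|^(-r), c^(-r) e^(-q r)) <= c^(-r) 2^(q r) (|s - z| + e)^(-q r), whose
   integral the fundamental theorem of calculus bounds uniformly in e, and let
   e -> 0 by monotone convergence. *)

Section powR_facts.
Context {R : realType}.
Implicit Types c d q u : R.

Lemma ge0_ger_powRN (r : R) : 0 <= r ->
  {in Num.pos &, {homo (@powR R) ^~ (- r) : x y / x <= y >-> y <= x}}.
Proof.
move=> r0 x y /[!posrE] x0 y0 xy; rewrite !powRN lef_pV2 ?posrE ?powR_gt0 //.
by apply: ge0_ler_powR; rewrite // nnegrE ltW.
Qed.

Lemma sqrtr_mul_powR_half_le_norm (A w al d : R) : 0 <= A -> 0 <= w ->
  A * w `^ al <= d ^+ 2 -> Num.sqrt A * w `^ (al / 2) <= `|d|.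
Proof.
move=> A0 w0 le_sq.
rewrite -ler_sqr ?nnegrE ?mulr_ge0 ?sqrtr_ge0 ?powR_ge0 //.
rewrite exprMn sqr_sqrtr // -powR_mulrn ?powR_ge0 // -powRrM real_normK ?num_real //.
by rewrite divfK ?pnatr_eq0.
Qed.

Lemma min_powRN_le_powRN_distD (c q r x y e : R) :
  0 < c -> 0 < q -> 0 < r -> 0 <= x -> 0 < e -> c * x `^ q <= y ->
  Num.min (y `^ (- r)) (c `^ (- r) * e^-1 `^ (q * r))
    <= c `^ (- r) * 2 `^ (q * r) * (x + e) `^ (- (q * r)).
Proof.
move=> c0 q0 r0 x0 e0 le_y; set p := q * r; set m := Num.max x e.
have m0 : 0 < m by rewrite lt_max e0 orbT.
apply: (@le_trans _ _ (c `^ (- r) * m `^ (- p))).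
  have [ex | xe] := leP e x.
  - have cx : 0 < c * x `^ q by rewrite mulr_gt0 ?powR_gt0 // (lt_le_trans e0 ex).
    rewrite ge_min; apply/orP; left.
    apply: le_trans (ge0_ger_powRN r (ltW r0) _ _ cx (lt_le_trans cx le_y) le_y) _.
    by rewrite powRM ?powR_ge0 ?(ltW c0) // -powRrM mulrN -/p /m max_l.
  - rewrite ge_min /m max_r ?(ltW xe) // -powR_inv1 ?(ltW e0) // -powRrM mulN1r.
    by rewrite lexx orbT.
rewrite -mulrA ler_wpM2l ?powR_ge0 //.
have -> : m `^ (- p) = 2 `^ p * (2 * m) `^ (- p).
  by rewrite powRM ?ler0n ?(ltW m0) // mulrA [2 `^ (- p)]powRN mulfV ?gt_eqF ?powR_gt0 // mul1r.
rewrite ler_wpM2l ?powR_ge0 //; apply: ge0_ger_powRN; rewrite ?posrE.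
- by rewrite mulr_ge0 // ltW.
- exact: ltr_wpDl.
- by rewrite mulr_gt0.
- by rewrite mulr_natl mulr2n lerD // le_max lexx ?orbT.
Qed.

Lemma is_derive_powR_subr c q u : c < u ->
  is_derive u 1 (fun v => (v - c) `^ q) (q * (u - c) `^ (q - 1)).
Proof.
move=> cu; have uc0 : 0 < u - c by rewrite subr_gt0.
have := @is_derive1_comp _ (fun x => x `^ q) (fun v => v - c) u _ _ (is_derive1_powR q uc0)
  (is_derive_shift u 1 (- c)).
by rewrite mulr1.
Qed.

Lemma is_derive_powR_rsubr c q u : u < c ->
  is_derive u 1 (fun v => (c - v) `^ q) (- (q * (c - u) `^ (q - 1))).
Proof.
move=> uc; have cu0 : 0 < c - u by rewrite subr_gt0.
have dN : is_derive u 1 (fun v : R => c - v) (-1).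
  by have := is_deriveD (is_derive_cst c u 1) (is_deriveN (is_derive_id u 1)); rewrite add0r.
have := @is_derive1_comp _ (fun x => x `^ q) (fun v => c - v) u _ _ (is_derive1_powR q cu0) dN.
by rewrite mulrN1.
Qed.

Lemma powR_subr_cvg0 c q : 0 < q -> (u - c) `^ q @[u --> c^'+] --> 0.
Proof.
move=> q0; have /cvgrPdist_lt cvg0 := powR_cvg0 q0.
apply/cvgrPdist_lt => e e0; have [d /= d0 near0] := cvg0 e e0.
exists d => //= u /= cud cu; apply: near0; last by rewrite /= subr_gt0.
by rewrite /= sub0r normrN distrC.
Qed.

Lemma powR_rsubr_cvg0 c q : 0 < q -> (c - u) `^ q @[u --> c^'-] --> 0.
Proof.
move=> q0; have /cvgrPdist_lt cvg0 := powR_cvg0 q0.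
apply/cvgrPdist_lt => e e0; have [d /= d0 near0] := cvg0 e e0.
exists d => //= u /= cud uc; apply: near0; last by rewrite /= subr_gt0.
by rewrite /= sub0r normrN.
Qed.

Lemma derivable_oo_LRcontinuous_powR_subr c d q : c < d -> 0 < q ->
  derivable_oo_LRcontinuous (fun u => (u - c) `^ q) c d.
Proof.
move=> cd q0; split.
- by move=> u; rewrite in_itv /= => /andP[cu _]; have [] := is_derive_powR_subr _ q _ cu.
- by rewrite subrr powR0 ?gt_eqF //; exact: powR_subr_cvg0.
- apply: cvg_at_left_filter; have [+ _] := is_derive_powR_subr _ q _ cd.
  by move/derivable1_diffP/differentiable_continuous.
Qed.

Lemma derivable_oo_LRcontinuous_powR_rsubr c d q : c < d -> 0 < q ->
  derivable_oo_LRcontinuous (fun u => (d - u) `^ q) c d.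
Proof.
move=> cd q0; split.
- by move=> u; rewrite in_itv /= => /andP[_ ud]; have [] := is_derive_powR_rsubr _ q _ ud.
- apply: cvg_at_right_filter; have [+ _] := is_derive_powR_rsubr _ q _ cd.
  by move/derivable1_diffP/differentiable_continuous.
- by rewrite subrr powR0 ?gt_eqF //; exact: powR_rsubr_cvg0.
Qed.

End powR_facts.

Section growth.
Context {R : realType}.

Lemma within_continuous_subitv {g : R -> R} {a b s t : R} : a <= s -> t <= b ->
  {within `[a, b], continuous g} -> {within `[s, t], continuous g}.
Proof.
move=> a_s tb; apply: continuous_subspaceW => x /=; rewrite !in_itv /= => /andP[sx xt].
by rewrite (le_trans a_s sx) (le_trans xt tb).
Qed.

Lemma ler_sub_of_ler_derive (g h dg dh : R -> R) (k s t : R) : s <= t ->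
  {within `[s, t], continuous g} -> {within `[s, t], continuous h} ->
  (forall u, s < u < t -> is_derive u 1 g (dg u)) ->
  (forall u, s < u < t -> is_derive u 1 h (dh u)) ->
  (forall u, s < u < t -> k * dh u <= dg u) ->
  k * (h t - h s) <= g t - g s.
Proof.
rewrite le_eqVlt => /predU1P[<- | st] cg ch g' h' le_dhg; first by rewrite !subrr mulr0.
have d_gh u : u \in `]s, t[ -> is_derive u 1 (fun v => g v - k * h v) (dg u - k * dh u).
  by rewrite in_itv /= => ust; apply: is_deriveB; [exact: g' | apply: is_deriveZ; exact: h'].
have c_gh : {within `[s, t], continuous (fun v => g v - k * h v)}.
  rewrite continuous_subspace_in => x _.
  by apply: cvgB; [exact: cg | apply: cvgM; [exact: cvg_cst | exact: ch]].
have [u /[!in_itv] /= ust E] := MVT st d_gh c_gh.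
rewrite -subr_ge0 (_ : _ - _ = g t - k * h t - (g s - k * h s)); last by ring.
by rewrite E mulr_ge0 // subr_ge0 ?le_dhg // ltW.
Qed.

Lemma powR_growth_subr (g dg : R -> R) (k q s t : R) : s <= t -> 0 < q ->
  {within `[s, t], continuous g} -> (forall u, s < u < t -> is_derive u 1 g (dg u)) ->
  (forall u, s < u < t -> k * (u - s) `^ (q - 1) <= dg u) ->
  k / q * (t - s) `^ q <= g t - g s.
Proof.
rewrite le_eqVlt => /predU1P[<- | st] q0 cg g' le_dg.
  by rewrite !subrr powR0 ?gt_eqF // mulr0.
have := @ler_sub_of_ler_derive g (fun u => (u - s) `^ q) dg (fun u => q * (u - s) `^ (q - 1))
  (k / q) s t (ltW st) cg.
rewrite subrr powR0 ?gt_eqF // subr0; apply.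
- exact/derivable_oo_LRcontinuous_within/derivable_oo_LRcontinuous_powR_subr.
- by move=> u /andP[su _]; exact: is_derive_powR_subr.
- by move=> u ust; rewrite mulrA divfK ?gt_eqF // le_dg.
Qed.

Lemma powR_growth_rsubr (g dg : R -> R) (k q s t : R) : s <= t -> 0 < q ->
  {within `[s, t], continuous g} -> (forall u, s < u < t -> is_derive u 1 g (dg u)) ->
  (forall u, s < u < t -> k * (t - u) `^ (q - 1) <= dg u) ->
  k / q * (t - s) `^ q <= g t - g s.
Proof.
rewrite le_eqVlt => /predU1P[<- | st] q0 cg g' le_dg.
  by rewrite !subrr powR0 ?gt_eqF // mulr0.
have := @ler_sub_of_ler_derive g (fun u => - (t - u) `^ q) dg (fun u => q * (t - u) `^ (q - 1))
  (k / q) s t (ltW st) cg.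
rewrite subrr powR0 ?gt_eqF // oppr0 sub0r opprK; apply.
- have c_pow := derivable_oo_LRcontinuous_within
    (derivable_oo_LRcontinuous_powR_rsubr s t q st q0).
  by rewrite continuous_subspace_in => x _; apply: cvgN; exact: c_pow.
- by move=> u /andP[_ ut]; rewrite -[X in is_derive _ _ _ X]opprK; apply: is_deriveN;
    exact: is_derive_powR_rsubr.
- by move=> u ust; rewrite mulrA divfK ?gt_eqF // le_dg.
Qed.

Lemma powR_increment_of_weighted_derive {g dg : R -> R} {t1 t2 a b k be : R} :
  t1 <= a -> b <= t2 -> 0 <= k -> 0 < be ->
  {within `[a, b], continuous g} -> (forall u, a < u < b -> is_derive u 1 g (dg u)) ->
  (forall u, a < u < b -> k * (u - t1) `^ be <= dg u) \/
  (forall u, a < u < b -> k * (t2 - u) `^ be <= dg u) ->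
  forall s t, a <= s -> s <= t -> t <= b -> k / (be + 1) * (t - s) `^ (be + 1) <= g t - g s.
Proof.
move=> t1a bt2 k0 be0 cg g' dg_ge s t a_s st tb.
have q0 : 0 < be + 1 by rewrite addr_gt0.
have cst := within_continuous_subitv a_s tb cg.
have g'st u : s < u < t -> is_derive u 1 g (dg u).
  by move=> /andP[su ut]; apply: g'; rewrite (le_lt_trans a_s su) (lt_le_trans ut tb).
have inab u : s < u < t -> a < u < b.
  by move=> /andP[su ut]; rewrite (le_lt_trans a_s su) (lt_le_trans ut tb).
have weaken w w' u : 0 <= w -> w <= w' -> k * w' `^ be <= dg u -> k * w `^ be <= dg u.
  move=> w0 ww' /(le_trans _); apply; rewrite ler_wpM2l //.
  by apply: ge0_ler_powR; rewrite ?nnegrE ?(ltW be0) ?(le_trans w0 ww').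
case: dg_ge => dg_ge.
- apply: powR_growth_subr => // u ust; rewrite addrK.
  apply: (weaken _ (u - t1)); [by case/andP: ust => su _; rewrite subr_ge0 ltW | lra |].
  exact/dg_ge/inab.
- apply: powR_growth_rsubr => // u ust; rewrite addrK.
  apply: (weaken _ (t2 - u)); [by case/andP: ust => _ ut; rewrite subr_ge0 ltW | lra |].
  exact/dg_ge/inab.
Qed.

Lemma continuous_nonvanishing_sign {d : R -> R} {a b : R} :
  {within `[a, b], continuous d} -> (forall u, a < u < b -> d u != 0) ->
  exists2 sg : R, `|sg| = 1 & forall u, a < u < b -> sg * d u = `|d u|.
Proof.
move=> cd nz.
have no_root x y : a < x -> x <= y -> y < b ->
    Num.min (d x) (d y) <= 0 <= Num.max (d x) (d y) -> False.
  move=> ax xy yb /(IVT xy (within_continuous_subitv (ltW ax) (ltW yb) cd)).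
  move=> [z /[!in_itv] /= /andP[xz zy] dz0].
  have := nz z; rewrite (lt_le_trans ax xz) (le_lt_trans zy yb) dz0 eqxx.
  by move=> /(_ isT).
case: (pselect (exists2 u, a < u < b & d u < 0)) => [[v /andP[av vb] dv] | Nneg].
  exists (-1) => [|u /andP[au ub]]; first by rewrite normrN1.
  rewrite mulN1r ltr0_norm // ltNge; apply/negP => du.
  have [uv | vu] := leP u v.
    by apply: (no_root u v) => //; rewrite ge_min le_max (ltW dv) du orbT.
  by apply: (no_root v u) => //; [exact: ltW | rewrite ge_min le_max (ltW dv) du orbT].
exists 1 => [|u uab]; first by rewrite normr1.
rewrite mul1r gtr0_norm // lt_neqAle eq_sym nz //= leNgt; apply/negP => du.
by apply: Nneg; exists u.
Qed.

Lemma exists_center_powR_le_norm {g : R -> R} {a b c q : R} : a <= b -> 0 < q ->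
  {within `[a, b], continuous g} ->
  (forall s t, a <= s -> s <= t -> t <= b -> c * (t - s) `^ q <= g t - g s) ->
  exists2 z, a <= z <= b & forall s, a <= s <= b -> c * `|s - z| `^ q <= `|g s|.
Proof.
move=> ab q0 cg incr.
suff [z /andP[az zb] sgn_z] : exists2 z, a <= z <= b &
    (a < z -> g z <= 0) /\ (z < b -> 0 <= g z).
  exists z => [|s /andP[a_s sb]]; first by rewrite az zb.
  case: (ltgtP s z) => [sz | zs | ->]; last by rewrite subrr normr0 powR0 ?gt_eqF // mulr0.
  - rewrite distrC gtr0_norm ?subr_gt0 //.
    have := incr s z a_s (ltW sz) zb; have := sgn_z.1 (le_lt_trans a_s sz).
    rewrite -normrN; have := ler_norm (- g s); lra.
  - rewrite gtr0_norm ?subr_gt0 //.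
    have := incr z s az (ltW zs) sb; have := sgn_z.2 (lt_le_trans zs sb).
    have := ler_norm (g s); lra.
have [ga | ga] := leP 0 (g a).
  by exists a; [rewrite lexx ab | split => //; rewrite ltxx].
have [gb | gb] := leP (g b) 0.
  by exists b; [rewrite lexx ab | split => //; rewrite ltxx].
have [z zab gz] : exists2 z, z \in `[a, b] & g z = 0.
  by apply: IVT => //; rewrite ge_min le_max (ltW ga) (ltW gb) orbT.
by exists z; [move: zab; rewrite in_itv | rewrite gz].
Qed.

Lemma exists_center_of_norm_derive_ge {f df : R -> R} {t1 t2 a b k be : R} :
  t1 <= a -> a <= b -> b <= t2 -> 0 < k -> 0 < be ->
  {within `[a, b], continuous f} -> {within `[a, b], continuous df} ->
  (forall u, a < u < b -> is_derive u 1 f (df u)) ->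
  (forall u, a < u < b -> k * (u - t1) `^ be <= `|df u|) \/
  (forall u, a < u < b -> k * (t2 - u) `^ be <= `|df u|) ->
  exists2 z, a <= z <= b &
    forall s, a <= s <= b -> k / (be + 1) * `|s - z| `^ (be + 1) <= `|f s|.
Proof.
move=> t1a ab bt2 k0 be0 cf cdf f' df_ge.
have df_nz u : a < u < b -> df u != 0.
  move=> uab; rewrite -normr_gt0; case/andP: (uab) => au ub.
  by case: df_ge => /(_ u uab); apply: lt_le_trans; rewrite mulr_gt0 ?powR_gt0 // subr_gt0; lra.
have [sg sg1 sgE] := continuous_nonvanishing_sign cdf df_nz.
have csgf : {within `[a, b], continuous (fun x => sg * f x)}.
  by rewrite continuous_subspace_in => x _; apply: cvgM; [exact: cvg_cst | exact: cf].
have sgf' u : a < u < b -> is_derive u 1 (fun x => sg * f x) `|df u|.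
  by move=> uab; rewrite -sgE //; exact: (is_deriveZ sg (f' u uab)).
have [z zab zP] := exists_center_powR_le_norm ab (addr_gt0 be0 ltr01) csgf
  (powR_increment_of_weighted_derive t1a bt2 (ltW k0) be0 csgf sgf' df_ge).
by exists z => // s sab; have := zP s sab; rewrite normrM sg1 mul1r.
Qed.

End growth.

Section truncation.
Context d (T : measurableType d) (R : realType) (mu : {measure set T -> \bar R}).

Lemma ge0_integral_le_of_truncations (D : set T) (h : T -> R) (lvl : nat -> R)
    (M : \bar R) : measurable D -> measurable_fun D h -> (forall x, D x -> 0 <= h x) ->
  (forall n, 0 <= lvl n) -> {homo lvl : m n / (m <= n)%N >-> m <= n} ->
  (forall y, exists n, y <= lvl n) ->
  (forall n, \int[mu]_(x in D) (Num.min (h x) (lvl n))%:E <= M)%E ->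
  (\int[mu]_(x in D) (h x)%:E <= M)%E.
Proof.
move=> mD mh h0 lvl0 nd_lvl unbounded le_M.
pose g n x := (Num.min (h x) (lvl n))%:E.
have mg n : measurable_fun D (g n).
  by apply/measurable_EFinP; apply: measurable_minr => //; exact: measurable_cst.
have g0 n x : D x -> (0 <= g n x)%E by move=> Dx; rewrite lee_fin le_min h0 // lvl0.
have nd_g x : D x -> {homo g^~ x : m n / (m <= n)%N >-> (m <= n)%E}.
  by move=> _ m n mn; rewrite lee_fin le_min !ge_min lexx (nd_lvl _ _ mn) orbT.
have g_h x : limn (g^~ x) = (h x)%:E.
  apply/cvg_lim => //; apply: cvg_near_cst; have [N hN] := unbounded (h x).
  by near=> n; congr (_%:E); apply/min_idPl/(le_trans hN)/nd_lvl; near: n; exists N.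
have g_cvg := @cvg_monotone_convergence _ _ _ mu _ mD _ mg g0 nd_g.
rewrite (eq_integral (fun x => limn (g^~ x))) => [|x _]; last by rewrite g_h.
rewrite -(cvg_lim _ g_cvg) //; apply: lime_le; first by apply/cvg_ex; eexists; exact: g_cvg.
by apply: nearW => n; exact: le_M.
Unshelve. all: by end_near.
Qed.

End truncation.

Section integrals.
Context {R : realType}.
Notation mu := (@lebesgue_measure R).

Lemma derivable_oo_LRcontinuous_cc (f : R -> R) (u v : R) : u <= v ->
  (forall x, u <= x <= v -> derivable f x 1) -> derivable_oo_LRcontinuous f u v.
Proof.
move=> uv df; have cf x : u <= x <= v -> f @ x --> f x.
  by move=> /df /derivable1_diffP /differentiable_continuous.
split.
- by move=> x /[!in_itv] /= /andP[ux xv]; apply: df; rewrite (ltW ux) (ltW xv).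
- by apply: cvg_at_right_filter; apply: cf; rewrite lexx uv.
- by apply: cvg_at_left_filter; apply: cf; rewrite lexx uv.
Qed.

Lemma integral_powRN_subr_le (c u v p : R) : c < u -> u <= v -> 0 < p < 1 ->
  (\int[mu]_(s in `[u, v]) ((s - c) `^ (- p))%:E
     <= ((v - c) `^ (1 - p) / (1 - p))%:E)%E.
Proof.
move=> cu + /andP[p0 p1]; have p1' : 0 < 1 - p by rewrite subr_gt0.
rewrite le_eqVlt => /predU1P[<- | uv].
  by rewrite set_itv1 integral_set1 lee_fin divr_ge0 ?powR_ge0 // (ltW p1').
pose F s := (1 - p)^-1 * (s - c) `^ (1 - p).
have F' x : c < x -> is_derive x 1 F ((x - c) `^ (- p)).
  move=> cx; have -> : (x - c) `^ (- p) = (1 - p)^-1 * ((1 - p) * (x - c) `^ (1 - p - 1)).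
    by rewrite mulrA mulVf ?gt_eqF // mul1r; congr (_ `^ _); ring.
  exact: is_deriveZ (is_derive_powR_subr c (1 - p) x cx).
have f' x : c < x -> derivable (fun s => (s - c) `^ (- p)) x 1.
  by move=> cx; have [] := is_derive_powR_subr c (- p) x cx.
rewrite (@continuous_FTC2 _ _ F) //.
- rewrite -EFinB lee_fin /F mulrC [_ / _]mulrC gerBl mulr_ge0 ?powR_ge0 //.
  by rewrite invr_ge0 ltW.
- apply: derivable_within_continuous => x /[!in_itv] /= /andP[ux _].
  exact/f'/(lt_le_trans cu ux).
- apply: derivable_oo_LRcontinuous_cc => [|x /andP[ux _]]; first exact: ltW.
  by have [] := F' x (lt_le_trans cu ux).
- move=> x /[!in_itv] /= /andP[ux _].
  by rewrite derive1E; have [_ ->] := F' x (lt_trans cu ux).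
Qed.

Lemma continuous_powR_normD (z e r : R) : 0 < e ->
  continuous (fun x => (`|x - z| + e) `^ r).
Proof.
move=> e0 x; have pos : 0 < `|x - z| + e by rewrite ltr_pwDr.
apply: (@continuous_comp _ _ _ (fun x => `|x - z| + e) (fun y => y `^ r)).
  by apply: cvgD; [apply: cvg_norm; apply: cvgB; [exact: cvg_id | exact: cvg_cst] | exact: cvg_cst].
by have [+ _] := is_derive1_powR r pos; move/derivable1_diffP/differentiable_continuous.
Qed.

Lemma integral_powRN_distD_right (z v e p : R) : z <= v -> 0 < e -> 0 < p < 1 ->
  (\int[mu]_(s in `[z, v]) ((`|s - z| + e) `^ (- p))%:E
     <= ((v - z + e) `^ (1 - p) / (1 - p))%:E)%E.
Proof.
move=> zv e0 p01.
rewrite (@eq_integral _ _ _ mu _ (fun s => ((s - (z - e)) `^ (- p))%:E)); last first.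
  move=> s; rewrite inE /= in_itv /= => /andP[zs _].
  by rewrite ger0_norm ?subr_ge0 //; congr ((_ `^ _)%:E); ring.
have -> : v - z + e = v - (z - e) by ring.
by apply: integral_powRN_subr_le => //; rewrite ltrBlDr ltrDl.
Qed.

Lemma integral_powRN_distD_left (a z e p : R) : a <= z -> 0 < e -> 0 < p < 1 ->
  (\int[mu]_(s in `[a, z]) ((`|s - z| + e) `^ (- p))%:E
     <= ((z - a + e) `^ (1 - p) / (1 - p))%:E)%E.
Proof.
move=> az e0 p01.
rewrite (@eq_integral _ _ _ mu _
  (fun s => (((fun x => (`|x - - z| + e) `^ (- p)) \o -%R) s)%:E)); last first.
  by move=> s _ /=; rewrite -opprD normrN distrC.
rewrite -integration_by_substitution_oppr //; last first.
  exact/continuous_subspaceT/continuous_powR_normD.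
have -> : z - a + e = - a - - z + e by ring.
by apply: integral_powRN_distD_right; rewrite // lerN2.
Qed.

Lemma integral_powRN_distD_le (a b z e p L : R) : a <= z -> z <= b -> b - a <= L ->
  0 < e -> e <= 1 -> 0 < p < 1 ->
  (\int[mu]_(s in `[a, b]) ((`|s - z| + e) `^ (- p))%:E
     <= (2 * ((L + 1) `^ (1 - p) / (1 - p)))%:E)%E.
Proof.
move=> az zb baL e0 e1 /[dup] p01 /andP[p0 p1].
have p1' : 0 < 1 - p by rewrite subr_gt0.
have le_bound w : 0 <= w -> w <= L + 1 ->
    (w `^ (1 - p) / (1 - p) <= (L + 1) `^ (1 - p) / (1 - p))%R.
  move=> w0 wL; rewrite ler_pM2r ?invr_gt0 //.
  by apply: ge0_ler_powR; rewrite ?nnegrE ?(ltW p1') ?(le_trans w0 wL).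
have mG := continuous_measurable_fun (continuous_powR_normD z e (- p) e0).
have -> : `[a, b]%classic = `[a, z]%classic `|` `]z, b]%classic.
  by rewrite (@itv_bndbnd_setU _ _ _ (BRight z)) // bnd_simp.
rewrite ge0_integral_setU //=; first last.
- apply/disj_setPS => s [] /=; rewrite !in_itv /= => /andP[_ sz] /andP[zs _].
  by move: (lt_le_trans zs sz); rewrite ltxx.
- by move=> s _; rewrite lee_fin powR_ge0.
- by apply/measurable_EFinP; exact: measurable_funS mG.
rewrite integral_itv_obnd_cbnd; last by apply/measurable_EFinP; exact: measurable_funS mG.
rewrite mulr_natl mulr2n EFinD; apply: leeD.
- apply: le_trans; first exact: integral_powRN_distD_left.
  by rewrite lee_fin le_bound //; lra.
- apply: le_trans; first exact: integral_powRN_distD_right.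
  by rewrite lee_fin le_bound //; lra.
Qed.

Lemma integral_powRN_le_of_powR_dist_le (F : R -> R) (a b z L c q r : R) :
  a <= z -> z <= b -> b - a <= L -> 0 < c -> 0 < q -> 0 < r -> q * r < 1 ->
  measurable_fun `[a, b] F ->
  (forall s, a <= s <= b -> c * `|s - z| `^ q <= `|F s|) ->
  (\int[mu]_(s in `[a, b]) (`|F s| `^ (- r))%:E
    <= (c `^ (- r) * 2 `^ (q * r) * (2 * ((L + 1) `^ (1 - q * r) / (1 - q * r))))%:E)%E.
Proof.
move=> az zb baL c0 q0 r0 p1 mF F_ge.
set p := q * r; set K := c `^ (- r).
have p0 : 0 < p by rewrite mulr_gt0.
have K0 : 0 < K by rewrite powR_gt0.
apply: (@ge0_integral_le_of_truncations _ _ _ mu _ (fun s => `|F s| `^ (- r))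
  (fun n => K * n.+1%:R `^ p)) => //.
- exact: measurableT_comp (measurable_powR _) (measurableT_comp (@normr_measurable _ setT) mF).
- by move=> n; rewrite mulr_ge0 ?powR_ge0 // (ltW K0).
- move=> m n mn; rewrite ler_wpM2l ?(ltW K0) //.
  by apply: ge0_ler_powR; rewrite ?nnegrE ?ler0n ?ler_nat ?(ltW p0).
- move=> y; set y' := Num.max y 0; set w := (y' / K) `^ p^-1.
  exists (Num.Def.archi_bound w); apply: (@le_trans _ _ y'); first by rewrite le_max lexx.
  have -> : y' = K * w `^ p.
    rewrite -powRrM mulVf ?gt_eqF // powRr1; first by rewrite mulrC divfK ?gt_eqF.
    by rewrite divr_ge0 ?(ltW K0) // le_max lexx orbT.
  rewrite ler_wpM2l ?(ltW K0) //; apply: ge0_ler_powR; rewrite ?nnegrE ?powR_ge0 ?(ltW p0) //.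
  by apply: (le_trans (ltW (archi_boundP (powR_ge0 _ _)))); rewrite ler_nat.
- move=> n; set e := n.+1%:R^-1 : R.
  have e0 : 0 < e by rewrite invr_gt0.
  have e1 : e <= 1 by rewrite invf_le1 // ler1n.
  have mB : measurable_fun `[a, b] (fun s => (`|s - z| + e) `^ (- p)).
    exact: measurable_funS (continuous_measurable_fun (continuous_powR_normD z e (- p) e0)).
  apply: (@le_trans _ _ (\int[mu]_(s in `[a, b])
    ((K * 2 `^ p)%:E * ((`|s - z| + e) `^ (- p))%:E))%E).
    apply: ge0_le_integral => //.
    + by move=> s _; rewrite lee_fin le_min !powR_ge0 mulr_ge0 ?powR_ge0 ?(ltW K0).
    + apply/measurable_EFinP; apply: measurable_minr; last exact: measurable_cst.
      exact: measurableT_comp (measurable_powR _) (measurableT_comp (@normr_measurable _ setT) mF).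
    + by apply/measurable_EFinP; apply: measurable_funM => //; exact: measurable_cst.
    + move=> s; rewrite /= in_itv /= => sab.
      rewrite -EFinM lee_fin -[n.+1%:R]invrK -/e.
      by apply: min_powRN_le_powRN_distD; rewrite ?normr_ge0 ?F_ge.
  rewrite ge0_integralZl_EFin ?mulr_ge0 ?powR_ge0 ?(ltW K0) //; first last.
  - exact/measurable_EFinP.
  - by move=> s _; rewrite lee_fin powR_ge0.
  rewrite [X in (_ <= X)%E]EFinM lee_pmul2l ?lte_fin ?mulr_gt0 ?powR_gt0 //.
  by apply: integral_powRN_distD_le => //; rewrite p0.
Qed.

End integrals.

Theorem lemma3p4 (R : realType) (theta1 theta2 gamma A alpha : R) :
  theta1 < theta2 -> 1 < gamma -> 0 < A -> 0 < alpha ->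
  alpha < 2 * gamma - 2 ->
  exists C : R, 0 < C /\
    forall (f df : R -> R) (a b : R),
      (* f is C^1 on [theta1, theta2], with derivative df *)
      {within `[theta1, theta2], continuous f} ->
      {within `[theta1, theta2], continuous df} ->
      (forall x, theta1 < x < theta2 -> is_derive x 1 f (df x)) ->
      (* I = [a, b] is a closed subinterval of [theta1, theta2] *)
      theta1 <= a -> a <= b -> b <= theta2 ->
      ((forall s, a <= s <= b -> A * (s - theta1) `^ alpha <= (df s) ^+ 2) \/
       (forall s, a <= s <= b -> A * (theta2 - s) `^ alpha <= (df s) ^+ 2)) ->
      (\int[@lebesgue_measure R]_(s in `[a, b]) ((`|f s| `^ (- gamma^-1))%:E)
         <= C%:E)%E.
Proof.
move=> t12 gamma1 A0 alpha0 alpha_lt.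
set be := alpha / 2; set q := be + 1; set r := gamma^-1; set k := Num.sqrt A.
set c := k / q; set L := theta2 - theta1.
have be0 : 0 < be by rewrite divr_gt0.
have q0 : 0 < q by rewrite addr_gt0.
have k0 : 0 < k by rewrite sqrtr_gt0.
have c0 : 0 < c by rewrite divr_gt0.
have r0 : 0 < r by rewrite invr_gt0 (lt_trans ltr01).
have qr1 : q * r < 1 by rewrite ltr_pdivrMr ?(lt_trans ltr01) // mul1r /q /be; lra.
exists (c `^ (- r) * 2 `^ (q * r) * (2 * ((L + 1) `^ (1 - q * r) / (1 - q * r)))).
split=> [|f df a b cf cdf f' t1a ab bt2 df_sq].
  by rewrite !mulr_gt0 ?powR_gt0 ?invr_gt0 ?subr_gt0 // /L; lra.
have f'ab u : a < u < b -> is_derive u 1 f (df u).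
  by move=> /andP[au ub]; apply: f'; rewrite (le_lt_trans t1a au) (lt_le_trans ub bt2).
have df_ge : (forall u, a < u < b -> k * (u - theta1) `^ be <= `|df u|) \/
             (forall u, a < u < b -> k * (theta2 - u) `^ be <= `|df u|).
  case: df_sq => df_sq; [left | right] => u /andP[au ub];
    (apply: sqrtr_mul_powR_half_le_norm; [exact: ltW | lra | ]);
    by apply: df_sq; rewrite (ltW au) (ltW ub).
have [z /andP[az zb] zP] := exists_center_of_norm_derive_ge t1a ab bt2 k0 be0
  (within_continuous_subitv t1a bt2 cf) (within_continuous_subitv t1a bt2 cdf) f'ab df_ge.
apply: (integral_powRN_le_of_powR_dist_le f a b z L) => //.
- by rewrite /L; lra.
- apply: measurable_funS (subspace_continuous_measurable_fun _ cf) => //.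
  by apply: subset_itv; rewrite bnd_simp.
Qed.
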